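(* Let $R$ be a tangible supersemifield, $(q,b)$ a quadratic pair on an $R$-module $V$, $x,y\in V$, and put $\alpha_1=q(x)$, $\alpha_2=q(y)$, $\alpha=b(x,y)$, all assumed nonzero. Choose $\zeta,\eta\in\mathcal T$ with $\alpha\cong_\nu\zeta\alpha_1$ and $\alpha_2\cong_\nu\eta\alpha$. Let $\lambda,\mu\in R$, not both zero. (i) If $\alpha^2>_\nu\alpha_1\alpha_2$ and it is not the case that [$R$ is discrete and $\alpha^2\cong_\nu\pi^{-1}\alpha_1\alpha_2$], then $q(\lambda x+\mu y)=\lambda^2\alpha_1$ if $\lambda>_\nu\zeta\mu$; $=e\lambda^2\alpha_1=e\lambda\mu\alpha$ if $\lambda\cong_\nu\zeta\mu$; $=\lambda\mu\alpha$ if $\eta\mu<_\nu\lambda<_\nu\zeta\mu$; $=e\mu^2\alpha_2=e\lambda\mu\alpha$ if $\lambda\cong_\nu\eta\mu$; $=\mu^2\alpha_2$ if $\lambda<_\nu\eta\mu$. (ii) If $R$ is discrete and $\alpha^2\cong_\nu\pi^{-1}\alpha_1\alpha_2$, then exactly one of $\lambda>_\nu\zeta\mu$, $\lambda\cong_\nu\zeta\mu$, $\lambda\cong_\nu\eta\mu$, $\lambda<_\nu\eta\mu$ holds, and correspondingly $q(\lambda x+\mu y)$ equals $\lambda^2\alpha_1$, $e\lambda^2\alpha_1=e\lambda\mu\alpha$, $e\mu^2\alpha_2=e\lambda\mu\alpha$, $\mu^2\alpha_2$. (iii) If $\alpha^2\le_\nu\alpha_1\alpha_2$, then $q(\lambda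 x+\mu y)=\lambda^2\alpha_1$ if $\lambda^2\alpha_1>_\nu\mu^2\alpha_2$; $=e\lambda^2\alpha_1=e\mu^2\alpha_2$ if $\lambda^2\alpha_1\cong_\nu\mu^2\alpha_2$ (which can only happen if $\alpha_1\alpha_2$ is a $\nu$-square); $=\mu^2\alpha_2$ if $\lambda^2\alpha_1<_\nu\mu^2\alpha_2$.
   Context: All semirings are commutative with $1$. A semiring $R$ is supertropical if $e:=1+1$ satisfies $e+e=e$ and, for all $x,y\in R$: if $ex\neq ey$ then $x+y\in\{x,y\}$, and if $ex=ey$ then $x+y=ey$. $eR$ is totally ordered by $u\le v\iff u+v=v$; write $x\le_\nu y$, $x\cong_\nu y$, $x<_\nu y$ for $ex\le ey$, $ex=ey$, $ex<ey$. $\mathcal T=R\setminus eR$, $\mathcal G=eR\setminus\{0\}$. A tangible supersemifield is a supertropical semiring in which $\mathcal T$ and $\mathcal G$ are groups under multiplication and $e\mathcal T=\mathcal G$. It is discrete if $\mathcal G$ has a smallest element $c_0>e$, and then $\pi\in\mathcal T$ denotes an element with $e\pi^{-1}=c_0$. An element $a\in R$ is a $\nu$-square if $a\cong_\nu d^2$ for some $d\in R$. A quadratic form on an $R$-module $V$ is a map $q:V\to R$ with $q(ax)=a^2q(x)$ such that some symmetric bilinear $b$ satisfies $q(x+y)=q(x)+q(y)+b(x,y)$; $(q,b)$ is a quadratic pair. *)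

From HB Require Import structures.
From mathcomp Require Import all_boot all_order all_algebra.
Set Implicit Arguments. Unset Strict Implicit. Unset Printing Implicit Defensive.
Import GRing.Theory.
Local Open Scope ring_scope.

Section Supertropical.
Variable R : comPzSemiRingType.

Definition ee : R := 1 + 1.

Definition supertropical : Prop :=
  ee + ee = ee /\
  (forall x y : R, ee * x <> ee * y -> x + y = x \/ x + y = y) /\
  (forall x y : R, ee * x = ee * y -> x + y = ee * y).

Definition in_eR (x : R) : Prop := exists r : R, x = ee * r.
Definition tangible (x : R) : Prop := ~ in_eR x.
Definition ghostnz (x : R) : Prop := in_eR x /\ x <> 0.

(** nu-relations: x <=_nu y iff ex <= ey in eR, where u <= v iff u + v = v *)
Definition nu_le (x y : R) : Prop := ee * x + ee * y = ee * y.
Definition nu_eq (x y : R) : Prop := ee * x = ee * y.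
Definition nu_lt (x y : R) : Prop := nu_le x y /\ ee * x <> ee * y.

(** S is a group under the multiplication of R (associativity is inherited) *)
Definition mul_group (S : R -> Prop) : Prop :=
  (forall x y, S x -> S y -> S (x * y)) /\
  exists u, S u /\ (forall x, S x -> u * x = x /\ x * u = x) /\
            (forall x, S x -> exists y, S y /\ x * y = u /\ y * x = u).

Definition tangible_supersemifield : Prop :=
  supertropical /\ mul_group tangible /\ mul_group ghostnz /\
  (forall x, tangible x -> ghostnz (ee * x)) /\
  (forall g, ghostnz g -> exists x, tangible x /\ g = ee * x).

Definition smallest_above_e (c0 : R) : Prop :=
  ghostnz c0 /\ nu_lt ee c0 /\
  (forall g, ghostnz g -> nu_lt ee g -> nu_le c0 g).

(** pinv plays the role of pi^{-1}: a tangible element with e pi^{-1} = c0,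
    the smallest element of G above e (so R is discrete) *)
Definition discrete_pinv (pinv : R) : Prop :=
  tangible pinv /\ smallest_above_e (ee * pinv).

Definition discrete_and_nu_eq_pinv (a c : R) : Prop :=
  exists pinv, discrete_pinv pinv /\ nu_eq a (pinv * c).

Definition nu_square (a : R) : Prop := exists d : R, nu_eq a (d ^+ 2).

Variable V : lSemiModType R.

Definition quadratic_pair (q : V -> R) (b : V -> V -> R) : Prop :=
  (forall (a : R) (x : V), q (a *: x) = a ^+ 2 * q x) /\
  (forall x y, b x y = b y x) /\
  (forall x x' y, b (x + x') y = b x y + b x' y) /\
  (forall (a : R) x y, b (a *: x) y = a * b x y) /\
  (forall x y, q (x + y) = q x + q y + b x y).

End Supertropical.

(* By the quadratic pair axioms, Q(lam x + mu y) = lam^2 a1 + mu^2 a2 + lam mu a,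
   and in a supertropical semiring a sum equals its strictly nu-dominant term,
   or e times a term when the two largest terms are nu-equivalent.  From
   a =nu zeta a1 and a2 =nu eta a, the three terms are nu-equivalent to
   (lam lam) a1, (eta mu)(zeta mu) a1 and lam (zeta mu) a1, so when
   eta <nu zeta (which is what a^2 >nu a1 a2 means) the dominant term is read
   off from the position of lam with respect to eta mu <nu zeta mu.  In the
   discrete case zeta =nu pi^-1 eta, and minimality of e pi^-1 among the ghosts
   above e leaves no room for lam strictly between eta mu and zeta mu.  When
   a^2 <=nu a1 a2, the square of the mixed term is nu-dominated by the product
   of the other two, so the mixed term never decides the sum. *)
From HB Require Import structures.
From mathcomp Require Import all_boot all_order all_algebra.
From mathcomp Require Import ring.
From Stdlib Require Import Classical.
Set Implicit Arguments. Unset Strict Implicit.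
Import GRing.Theory.
Local Open Scope ring_scope.

Definition binary_quadratic (R : comPzSemiRingType) (a1 a2 a l m : R) : R :=
  l ^+ 2 * a1 + m ^+ 2 * a2 + l * m * a.

Lemma quadratic_pair_expand (R : comPzSemiRingType) (V : lSemiModType R)
    (q : V -> R) (b : V -> V -> R) (x y : V) (lam mu : R) :
  quadratic_pair q b ->
  q (lam *: x + mu *: y) = binary_quadratic (q x) (q y) (b x y) lam mu.
Proof.
case=> qZ [bC [_ [bZ qD]]].
by rewrite qD !qZ bZ bC bZ bC mulrA.
Qed.

Section TangibleSupersemifield.
Variable R : comPzSemiRingType.
Hypothesis HR : tangible_supersemifield R.
Local Notation e := (ee R).
Implicit Types x y z c p h l m : R.

Lemma ee_idem : e * e = e.
Proof.
case: HR => [[eeD _] _].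
by have -> : e * e = e + e by rewrite {2}/ee mulrDr mulr1.
Qed.

Lemma tangible1 : tangible (1 : R).
Proof.
case: HR => _ [[_ [u [Tu _]]] _] [r r1].
by apply: Tu; exists (u * r); rewrite -{1}(mulr1 u) r1; ring.
Qed.

Lemma ee_neq0 : e <> 0.
Proof.
case: HR => _ [_ [_ [Te _]]].
by case: (Te _ tangible1); rewrite mulr1.
Qed.

Lemma tangible_neq0 x : tangible x -> x <> 0.
Proof. by move=> Tx x0; apply: Tx; exists 0; rewrite x0 mulr0. Qed.

(* A tangible element is inverted by the tangible group, a nonzero ghost by the
   ghost group, whose unit must be e; either way z w is nu-equivalent to 1. *)
Lemma nu_invertible z : z <> 0 -> exists w, e * (z * w) = e.
Proof.
move=> z_neq0.
case: HR => _ [[_ [u [_ [uT invT]]]] [[_ [g [Gg [gG invG]]]] [Te _]]].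
have Ge : ghostnz e by move: (Te _ tangible1); rewrite mulr1.
case: (classic (in_eR z)) => [ghost_z | Tz].
- have [w [_ [zw _]]] := invG z (conj ghost_z z_neq0).
  have g_ee : g = e.
    have [[r gr] _] := Gg; have [ge _] := gG _ Ge.
    by rewrite -[RHS]ge gr mulrAC ee_idem.
  by exists w; rewrite zw g_ee ee_idem.
- have [w [_ [zw _]]] := invT z Tz.
  exists w; rewrite zw; case: (uT _ tangible1); rewrite mulr1 => -> _.
  exact: mulr1.
Qed.

Lemma ee_mul_eq0 x : e * x = 0 -> x = 0.
Proof.
move=> ex0; apply: NNPP => x_neq0.
have [w xw] := nu_invertible x_neq0.
by apply: ee_neq0; rewrite -xw mulrA ex0 mul0r.
Qed.

Lemma mul_neq0 x y : x <> 0 -> y <> 0 -> x * y <> 0.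
Proof.
move=> x_neq0 y_neq0 xy0; have [w yw] := nu_invertible y_neq0.
apply: x_neq0; apply: ee_mul_eq0.
have -> : e * x = x * (e * (y * w)) by rewrite yw mulrC.
have -> : x * (e * (y * w)) = e * (x * y) * w by ring.
by rewrite xy0 mulr0 mul0r.
Qed.

Lemma nu_eq_sym x y : nu_eq x y -> nu_eq y x.
Proof. exact: esym. Qed.

Lemma nu_eq_trans x y z : nu_eq x y -> nu_eq y z -> nu_eq x z.
Proof. exact: etrans. Qed.

Lemma nu_eq_ee x : nu_eq (e * x) x.
Proof. by rewrite /nu_eq mulrA ee_idem. Qed.

Lemma nu_eq_mull c x y : nu_eq x y -> nu_eq (c * x) (c * y).
Proof. by rewrite /nu_eq mulrCA [e * (c * y)]mulrCA => ->. Qed.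

Lemma nu_eq_mulr c x y : nu_eq x y -> nu_eq (x * c) (y * c).
Proof. by rewrite /nu_eq !mulrA => ->. Qed.

Lemma nu_eq_mul x x' y y' : nu_eq x x' -> nu_eq y y' -> nu_eq (x * y) (x' * y').
Proof.
by move=> xx' yy'; apply: nu_eq_trans (nu_eq_mulr y xx') (nu_eq_mull x' yy').
Qed.

Lemma nu_eq_mulIr c x y : c <> 0 -> nu_eq (x * c) (y * c) -> nu_eq x y.
Proof.
move=> c_neq0 xy; have [w cw] := nu_invertible c_neq0.
have ee_mulcw t : e * t = e * (t * c) * w by rewrite -{1}cw; ring.
by rewrite /nu_eq ee_mulcw xy -ee_mulcw.
Qed.

Lemma nu_le_refl x : nu_le x x.
Proof. by case: HR => [[eeD _] _]; rewrite /nu_le -mulrDl eeD. Qed.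

Lemma nu_le_trans x y z : nu_le x y -> nu_le y z -> nu_le x z.
Proof. by rewrite /nu_le => xy <-; rewrite addrA xy. Qed.

Lemma nu_le_anti x y : nu_le x y -> nu_le y x -> nu_eq x y.
Proof. by rewrite /nu_le /nu_eq => xy yx; rewrite -yx addrC. Qed.

Lemma nu_le_congr x x' y y' : nu_eq x x' -> nu_eq y y' -> nu_le x y -> nu_le x' y'.
Proof. by rewrite /nu_le => <- <-. Qed.

Lemma nu_lt_congr x x' y y' : nu_eq x x' -> nu_eq y y' -> nu_lt x y -> nu_lt x' y'.
Proof. by rewrite /nu_lt /nu_le => <- <-. Qed.

Lemma nu_eq_le x y : nu_eq x y -> nu_le x y.
Proof. by move=> xy; apply: nu_le_congr (erefl _) xy (nu_le_refl x). Qed.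

Lemma nu_lt_le x y : nu_lt x y -> nu_le x y.
Proof. by case. Qed.

Lemma nu_lt_nle x y : nu_lt x y -> ~ nu_le y x.
Proof. by case=> xy nxy yx; apply: nxy; apply: nu_le_anti. Qed.

Lemma nu_lt_le_trans x y z : nu_lt x y -> nu_le y z -> nu_lt x z.
Proof.
move=> [xy nxy] yz; split; first exact: nu_le_trans yz.
by move=> xz; apply: nxy; apply: nu_le_anti => //; apply: nu_le_congr yz.
Qed.

Lemma nu_le_lt_trans x y z : nu_le x y -> nu_lt y z -> nu_lt x z.
Proof.
move=> xy [yz nyz]; split; first exact: nu_le_trans yz.
by move=> xz; apply: nyz; apply: nu_le_anti => //; apply: nu_le_congr xy.
Qed.

Lemma nu_trichotomy x y : [\/ nu_lt x y, nu_eq x y | nu_lt y x].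
Proof.
case: (classic (nu_eq x y)) => [xy | nxy]; first exact: Or32.
case: HR => [[_ [addP _]] _].
have := addP (e * x) (e * y); rewrite !mulrA ee_idem => /(_ nxy) [xy | xy].
- by apply: Or33; split; [rewrite /nu_le addrC xy | move/esym].
- exact: Or31.
Qed.

Lemma nu_lt_neq0 x y : nu_lt x y -> y <> 0.
Proof. by case=> xy nxy y0; apply: nxy; move: xy; rewrite /nu_le y0 mulr0 addr0. Qed.

Lemma nu_eq_neq0 x y : nu_eq x y -> x <> 0 -> y <> 0.
Proof.
by move=> xy x_neq0 y0; apply: x_neq0; apply: ee_mul_eq0; rewrite xy y0 mulr0.
Qed.

Lemma nu_le_mulr c x y : nu_le x y -> nu_le (x * c) (y * c).
Proof. by rewrite /nu_le !mulrA -mulrDl => ->. Qed.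

Lemma nu_lt_mulr c x y : c <> 0 -> nu_lt x y -> nu_lt (x * c) (y * c).
Proof.
move=> c_neq0 [xy nxy]; split; first exact: nu_le_mulr.
by move/(nu_eq_mulIr c_neq0).
Qed.

Lemma nu_lt_mulIr c x y : c <> 0 -> nu_lt (x * c) (y * c) -> nu_lt x y.
Proof.
move=> c_neq0 xy; case: (nu_trichotomy x y) => [// | /(nu_eq_mulr c) | yx].
- by case: xy.
- by case: (nu_lt_nle xy (nu_lt_le (nu_lt_mulr c_neq0 yx))).
Qed.

Lemma nu_lt_mulr_congr c x y (X Y : R) :
  nu_eq X (x * c) -> nu_eq Y (y * c) -> c <> 0 -> nu_lt x y -> nu_lt X Y.
Proof.
move=> Xx Yy c_neq0 xy.
exact: nu_lt_congr (nu_eq_sym Xx) (nu_eq_sym Yy) (nu_lt_mulr c_neq0 xy).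
Qed.

Lemma nu_eq_mulr_congr c x y (X Y : R) :
  nu_eq X (x * c) -> nu_eq Y (y * c) -> nu_eq x y -> nu_eq X Y.
Proof.
move=> Xx Yy xy.
exact: nu_eq_trans Xx (nu_eq_trans (nu_eq_mulr c xy) (nu_eq_sym Yy)).
Qed.

Lemma nu_lt_mul2 x x' y y' :
  nu_le x x' -> nu_lt y y' -> x' <> 0 -> nu_lt (x * y) (x' * y').
Proof.
move=> xx' yy' x'_neq0; apply: (nu_le_lt_trans (nu_le_mulr y xx')).
by rewrite ![x' * _]mulrC; apply: nu_lt_mulr.
Qed.

Lemma nu_lt_sqr x y : nu_lt (x ^+ 2) (y ^+ 2) -> nu_lt x y.
Proof.
rewrite !expr2 => xy; case: (nu_trichotomy x y) => [// | exy | yx].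
- by case: xy => _ /(_ (nu_eq_mul exy exy)).
- by case: (nu_lt_nle xy (nu_lt_le (nu_lt_mul2 (nu_lt_le yx) yx (nu_lt_neq0 yx)))).
Qed.

Lemma nu_le_sqr x y : nu_le (x ^+ 2) (y ^+ 2) -> nu_le x y.
Proof.
rewrite !expr2 => xy; case: (nu_trichotomy x y) => [/nu_lt_le | /nu_eq_le | yx] //.
by case: (nu_lt_nle (nu_lt_mul2 (nu_lt_le yx) yx (nu_lt_neq0 yx)) xy).
Qed.

Lemma addr_nu_dominant x y : nu_lt y x -> x + y = x.
Proof.
move=> yx; case: HR => [[_ [addP _]] _].
have [// | xy_y] : x + y = x \/ x + y = y by apply: addP; case: yx => _ /[swap] /esym.
by case: (nu_lt_nle yx); rewrite /nu_le -mulrDr xy_y.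
Qed.

Lemma addr_nu_eq x y : nu_eq x y -> x + y = e * y.
Proof. by case: HR => [[_ [_ addE]] _]; apply: addE. Qed.

Lemma nu_lt_add x y z : nu_lt x z -> nu_lt y z -> nu_lt (x + y) z.
Proof.
move=> xz yz; case: (nu_trichotomy x y) => [xy | xy | yx].
- by rewrite addrC addr_nu_dominant.
- by rewrite addr_nu_eq //; apply: nu_lt_congr (nu_eq_sym (nu_eq_ee y)) (erefl _) yz.
- by rewrite addr_nu_dominant.
Qed.

Lemma addr_ee_nu_le x y : nu_le y x -> e * x + y = e * x.
Proof.
move=> yx; case: (nu_trichotomy y x) => [yx' | xy | xy].
- by apply: addr_nu_dominant; apply: nu_lt_congr (erefl _) (nu_eq_sym (nu_eq_ee x)) yx'.
- by rewrite addr_nu_eq; [apply: xy | apply: nu_eq_trans (nu_eq_ee x) (nu_eq_sym xy)].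
- by case: (nu_lt_nle xy yx).
Qed.

Lemma nu_square_of_nu_eq (a1 a2 : R) l m :
  m <> 0 -> nu_eq (l ^+ 2 * a1) (m ^+ 2 * a2) -> nu_square (a1 * a2).
Proof.
move=> m_neq0 lm; have [w mw] := nu_invertible m_neq0.
(* a1 a2 =nu (l a1 / m)^2, with w a nu-inverse of m *)
exists (l * a1 * w); apply: (nu_eq_mulIr (mul_neq0 m_neq0 m_neq0)); rewrite /nu_eq.
transitivity (a1 * (e * (m ^+ 2 * a2))); first ring.
rewrite -lm; transitivity ((l * a1) ^+ 2 * (m * w) * (e * (m * w))); last ring.
rewrite mw; transitivity ((l * a1) ^+ 2 * (e * (m * w))); last ring.
by rewrite mw; ring.
Qed.

Lemma discrete_pinv_gt1 p : discrete_pinv p -> nu_lt 1 p.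
Proof.
case=> _ [_ [lt_e_ep _]].
by apply: nu_lt_congr _ (nu_eq_ee p) lt_e_ep; rewrite /nu_eq ee_idem mulr1.
Qed.

Lemma nu_lt_pinv_mul p h : discrete_pinv p -> h <> 0 -> nu_lt h (p * h).
Proof.
move=> Dp h_neq0; have := nu_lt_mulr h_neq0 (discrete_pinv_gt1 Dp).
by apply: nu_lt_congr; rewrite /nu_eq ?mul1r.
Qed.

(* If y <nu x <nu pi^-1 y, then e (x y^-1) would be a ghost strictly between e
   and e pi^-1 = c0. *)
Lemma discrete_gap p x y :
  discrete_pinv p -> y <> 0 -> nu_lt y x -> ~ nu_lt x (p * y).
Proof.
case=> _ [_ [_ c0_min]] y_neq0 yx xpy; have [w yw] := nu_invertible y_neq0.
have w_neq0 : w <> 0 by move=> w0; apply: ee_neq0; rewrite -yw w0 !mulr0.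
have x_neq0 := nu_lt_neq0 yx.
have ghost_xw : ghostnz (e * (x * w)).
  by split; [exists (x * w) | move/ee_mul_eq0; apply: mul_neq0].
have e_lt_xw : nu_lt e (e * (x * w)).
  apply: nu_lt_congr _ (nu_eq_sym (nu_eq_ee _)) (nu_lt_mulr w_neq0 yx).
  by rewrite /nu_eq yw ee_idem.
have p_le_xw := nu_le_congr (nu_eq_ee p) (nu_eq_ee _) (c0_min _ ghost_xw e_lt_xw).
apply: (nu_lt_nle xpy); apply: nu_le_congr (erefl _) _ (nu_le_mulr y p_le_xw).
by rewrite /nu_eq; transitivity (x * (e * (y * w))); [ring | rewrite yw mulrC].
Qed.

Lemma nu_position_discrete p z h l m :
  discrete_pinv p -> h <> 0 -> nu_eq z (p * h) ->
  [\/ nu_lt (z * m) l, nu_eq l (z * m), nu_eq l (h * m) | nu_lt l (h * m)].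
Proof.
move=> Dp h_neq0 zph.
case: (nu_trichotomy l (z * m)) => [lzm | | ]; [| exact: Or42 | exact: Or41].
case: (nu_trichotomy l (h * m)) => [| | hml]; [exact: Or44 | exact: Or43 |].
have m_neq0 : m <> 0 by move=> m0; apply: (nu_lt_neq0 lzm); rewrite m0 mulr0.
case: (discrete_gap Dp (mul_neq0 h_neq0 m_neq0) hml).
by apply: (nu_lt_le_trans lzm); rewrite mulrA; apply/nu_eq_le/nu_eq_mulr.
Qed.

Lemma nu_position_exclusive z h l m :
  nu_lt h z -> ~ (l = 0 /\ m = 0) ->
  ~ (nu_lt (z * m) l /\ nu_eq l (z * m)) /\
  ~ (nu_lt (z * m) l /\ nu_eq l (h * m)) /\
  ~ (nu_lt (z * m) l /\ nu_lt l (h * m)) /\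
  ~ (nu_eq l (z * m) /\ nu_eq l (h * m)) /\
  ~ (nu_eq l (z * m) /\ nu_lt l (h * m)) /\
  ~ (nu_eq l (h * m) /\ nu_lt l (h * m)).
Proof.
move=> hz lm_neq0; have hzm : nu_le (h * m) (z * m) := nu_le_mulr m (nu_lt_le hz).
split; [|split; [|split; [|split; [|split]]]]; case.
- by move=> [_ zml] /nu_eq_sym.
- by move=> zml /nu_eq_le lhm; apply: (nu_lt_nle zml); apply: nu_le_trans lhm hzm.
- by move=> zml /nu_lt_le lhm; apply: (nu_lt_nle zml); apply: nu_le_trans lhm hzm.
- move=> lzm lhm; case: (classic (m = 0)) => [m0 | m_neq0].
    by apply: lm_neq0; split => //; apply: ee_mul_eq0; rewrite lzm m0 !mulr0.
  by case: (nu_lt_mulr m_neq0 hz) => _ /(_ (nu_eq_trans (nu_eq_sym lhm) lzm)).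
- move=> lzm lhm; apply: (nu_lt_nle lhm).
  exact: nu_le_trans hzm (nu_eq_le (nu_eq_sym lzm)).
- by move=> lhm [_ /(_ lhm)].
Qed.

Section BinaryQuadratic.
Variables a1 a2 a zeta eta : R.
Hypotheses (a1_neq0 : a1 <> 0) (zeta_neq0 : zeta <> 0) (eta_neq0 : eta <> 0).
Hypotheses (a_zeta : nu_eq a (zeta * a1)) (a2_eta : nu_eq a2 (eta * a)).

Let a1sq_neq0 : a1 ^+ 2 <> 0.
Proof. by rewrite expr2; apply: mul_neq0. Qed.

Lemma nu_eq_sqr_a : nu_eq (a ^+ 2) (zeta * zeta * a1 ^+ 2).
Proof.
rewrite expr2; apply: nu_eq_trans (nu_eq_mul a_zeta a_zeta) _.
by rewrite /nu_eq; congr (_ * _); ring.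
Qed.

Lemma nu_eq_a1a2 : nu_eq (a1 * a2) (eta * zeta * a1 ^+ 2).
Proof.
apply: nu_eq_trans (nu_eq_mull a1 (nu_eq_trans a2_eta (nu_eq_mull eta a_zeta))) _.
by rewrite /nu_eq; congr (_ * _); ring.
Qed.

Lemma nu_lt_eta_zeta : nu_lt (a1 * a2) (a ^+ 2) -> nu_lt eta zeta.
Proof.
move=> lt12; apply: (nu_lt_mulIr zeta_neq0); apply: (nu_lt_mulIr a1sq_neq0).
exact: nu_lt_congr nu_eq_a1a2 nu_eq_sqr_a lt12.
Qed.

Lemma discrete_zeta_eta : discrete_and_nu_eq_pinv (a ^+ 2) (a1 * a2) ->
  exists2 p, discrete_pinv p & nu_eq zeta (p * eta).
Proof.
case=> p [Dp a_pinv]; exists p => //.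
apply: (nu_eq_mulIr zeta_neq0); apply: (nu_eq_mulIr a1sq_neq0).
apply: nu_eq_trans (nu_eq_sym nu_eq_sqr_a) (nu_eq_trans a_pinv _).
by rewrite -!mulrA; apply: nu_eq_mull; rewrite mulrA; apply: nu_eq_a1a2.
Qed.

Lemma binary_quadratic_eta_lt_zeta l m : nu_lt eta zeta -> ~ (l = 0 /\ m = 0) ->
  let S := binary_quadratic a1 a2 a l m in
  [/\ nu_lt (zeta * m) l -> S = l ^+ 2 * a1,
      nu_eq l (zeta * m) -> S = e * l ^+ 2 * a1 /\ S = e * l * m * a,
      nu_lt (eta * m) l -> nu_lt l (zeta * m) -> S = l * m * a,
      nu_eq l (eta * m) -> S = e * m ^+ 2 * a2 /\ S = e * l * m * a
    & nu_lt l (eta * m) -> S = m ^+ 2 * a2].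
Proof.
move=> eta_zeta lm_neq0 S; rewrite {}/S /binary_quadratic.
set u := eta * m; set v := zeta * m.
have uv : nu_le u v := nu_le_mulr m (nu_lt_le eta_zeta).
have m_neq0_of c : nu_eq l (c * m) -> m <> 0.
  move=> lcm m0; apply: lm_neq0; split=> //.
  by apply: ee_mul_eq0; rewrite lcm m0 !mulr0.
have nuA : nu_eq (l ^+ 2 * a1) (l * l * a1) by rewrite expr2.
have nuB : nu_eq (m ^+ 2 * a2) (u * v * a1).
  apply: nu_eq_trans (nu_eq_mull _ (nu_eq_trans a2_eta (nu_eq_mull eta a_zeta))) _.
  by rewrite /nu_eq /u /v; congr (_ * _); ring.
have nuC : nu_eq (l * m * a) (l * v * a1).
  apply: nu_eq_trans (nu_eq_mull _ a_zeta) _.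
  by rewrite /nu_eq /v; congr (_ * _); ring.
split.
- move=> vl; have l_neq0 := nu_lt_neq0 vl.
  have ul : nu_le u l := nu_le_trans uv (nu_lt_le vl).
  have BA := nu_lt_mulr_congr nuB nuA a1_neq0 (nu_lt_mul2 ul vl l_neq0).
  have CA := nu_lt_mulr_congr nuC nuA a1_neq0 (nu_lt_mul2 (nu_le_refl l) vl l_neq0).
  by rewrite (addr_nu_dominant BA) (addr_nu_dominant CA).
- move=> lv; have m_neq0 := m_neq0_of zeta lv.
  have uv' : nu_lt u v := nu_lt_mulr m_neq0 eta_zeta.
  have AC := nu_eq_mulr_congr nuA nuC (nu_eq_mull l lv).
  have vv_ll : nu_eq (v * v) (l * l) := nu_eq_mul (nu_eq_sym lv) (nu_eq_sym lv).
  have BA := nu_lt_mulr_congr nuB nuA a1_neq0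
    (nu_lt_congr (erefl _) vv_ll (nu_lt_mulr (nu_lt_neq0 uv') uv')).
  rewrite (addr_nu_dominant BA) (addr_nu_eq AC).
  by split; [rewrite -AC | ]; rewrite !mulrA.
- move=> ul lv; have l_neq0 := nu_lt_neq0 ul.
  rewrite addrC addr_nu_dominant //; apply: nu_lt_add.
  + exact: nu_lt_mulr_congr nuA nuC a1_neq0 (nu_lt_mul2 (nu_le_refl l) lv l_neq0).
  + exact: nu_lt_mulr_congr nuB nuC a1_neq0 (nu_lt_mulr (nu_lt_neq0 lv) ul).
- move=> lu; have m_neq0 := m_neq0_of eta lu.
  have uv' : nu_lt u v := nu_lt_mulr m_neq0 eta_zeta.
  have l_neq0 : l <> 0 := nu_eq_neq0 (nu_eq_sym lu) (mul_neq0 eta_neq0 m_neq0).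
  have lv : nu_lt l v := nu_le_lt_trans (nu_eq_le lu) uv'.
  have BC := nu_eq_mulr_congr nuB nuC (nu_eq_mulr v (nu_eq_sym lu)).
  have AB := nu_lt_mulr_congr nuA nuB a1_neq0
    (nu_lt_congr (erefl _) (nu_eq_mulr v lu) (nu_lt_mul2 (nu_le_refl l) lv l_neq0)).
  rewrite (addrC (l ^+ 2 * a1)) (addr_nu_dominant AB) (addr_nu_eq BC).
  by split; [rewrite -BC | ]; rewrite !mulrA.
- move=> lu; have u_neq0 := nu_lt_neq0 lu.
  have m_neq0 : m <> 0 by move=> m0; apply: u_neq0; rewrite /u m0 mulr0.
  have lv : nu_lt l v := nu_lt_le_trans lu uv.
  have AB := nu_lt_mulr_congr nuA nuB a1_neq0 (nu_lt_mul2 (nu_lt_le lu) lv u_neq0).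
  have CB := nu_lt_mulr_congr nuC nuB a1_neq0
    (nu_lt_mulr (nu_lt_neq0 (nu_lt_mulr m_neq0 eta_zeta)) lu).
  by rewrite (addrC (l ^+ 2 * a1)) (addr_nu_dominant AB) (addr_nu_dominant CB).
Qed.

Lemma binary_quadratic_nu_le l m : ~ (l = 0 /\ m = 0) -> nu_le (a ^+ 2) (a1 * a2) ->
  let S := binary_quadratic a1 a2 a l m in
  [/\ nu_lt (m ^+ 2 * a2) (l ^+ 2 * a1) -> S = l ^+ 2 * a1,
      nu_eq (l ^+ 2 * a1) (m ^+ 2 * a2) ->
        [/\ S = e * l ^+ 2 * a1, S = e * m ^+ 2 * a2 & nu_square (a1 * a2)]
    & nu_lt (l ^+ 2 * a1) (m ^+ 2 * a2) -> S = m ^+ 2 * a2].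
Proof.
move=> lm_neq0 a_le S; rewrite {}/S /binary_quadratic.
set A := l ^+ 2 * a1; set B := m ^+ 2 * a2; set C := l * m * a.
have CC : nu_le (C ^+ 2) (A * B).
  have -> : C ^+ 2 = a ^+ 2 * (l * m) ^+ 2 by rewrite /C; ring.
  have -> : A * B = a1 * a2 * (l * m) ^+ 2 by rewrite /A /B; ring.
  exact: nu_le_mulr.
split.
- move=> BA; have CA : nu_lt C A.
    apply: nu_lt_sqr; apply: (nu_le_lt_trans CC); rewrite expr2 [A * B]mulrC.
    exact: nu_lt_mulr (nu_lt_neq0 BA) BA.
  by rewrite (addr_nu_dominant BA) (addr_nu_dominant CA).
- move=> AB; have CA : nu_le C A.
    apply: nu_le_sqr; apply: (nu_le_trans CC); rewrite expr2.
    exact: nu_eq_le (nu_eq_mull A (nu_eq_sym AB)).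
  have m_neq0 : m <> 0.
    move=> m0; apply: lm_neq0; split=> //; apply: NNPP => l_neq0.
    apply: (mul_neq0 (mul_neq0 l_neq0 l_neq0) a1_neq0); rewrite -expr2.
    by apply: ee_mul_eq0; move: AB; rewrite /nu_eq /B m0 expr2 !mul0r mulr0.
  rewrite (addr_nu_eq AB) addr_ee_nu_le; last exact: nu_le_trans CA (nu_eq_le AB).
  by split; [rewrite -AB mulrA | rewrite mulrA | apply: nu_square_of_nu_eq m_neq0 AB].
- move=> AB; have CB : nu_lt C B.
    apply: nu_lt_sqr; apply: (nu_le_lt_trans CC); rewrite expr2.
    exact: nu_lt_mulr (nu_lt_neq0 AB) AB.
  by rewrite (addrC A) (addr_nu_dominant AB) (addr_nu_dominant CB).
Qed.

End BinaryQuadratic.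

End TangibleSupersemifield.

Theorem proposition3p4 (R : comPzSemiRingType) (V : lSemiModType R)
  (q : V -> R) (b : V -> V -> R) (x y : V) (zeta eta lam mu : R) :
  tangible_supersemifield R ->
  quadratic_pair q b ->
  q x <> 0 -> q y <> 0 -> b x y <> 0 ->
  tangible zeta -> tangible eta ->
  nu_eq (b x y) (zeta * q x) -> nu_eq (q y) (eta * b x y) ->
  ~ (lam = 0 /\ mu = 0) ->
  let a1 := q x in let a2 := q y in let a := b x y in
  let Q := q (lam *: x + mu *: y) in
  [/\
  (* (i) *)
  (nu_lt (a1 * a2) (a ^+ 2) ->
   ~ discrete_and_nu_eq_pinv (a ^+ 2) (a1 * a2) ->
   [/\ nu_lt (zeta * mu) lam -> Q = lam ^+ 2 * a1,
       nu_eq lam (zeta * mu) -> Q = ee R * lam ^+ 2 * a1 /\ Q = ee R * lam * mu * a,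
       nu_lt (eta * mu) lam -> nu_lt lam (zeta * mu) -> Q = lam * mu * a,
       nu_eq lam (eta * mu) -> Q = ee R * mu ^+ 2 * a2 /\ Q = ee R * lam * mu * a
     & nu_lt lam (eta * mu) -> Q = mu ^+ 2 * a2]),
  (* (ii) *)
  (discrete_and_nu_eq_pinv (a ^+ 2) (a1 * a2) ->
   [/\ [\/ nu_lt (zeta * mu) lam, nu_eq lam (zeta * mu),
           nu_eq lam (eta * mu) | nu_lt lam (eta * mu)],
       (~ (nu_lt (zeta * mu) lam /\ nu_eq lam (zeta * mu)) /\
        ~ (nu_lt (zeta * mu) lam /\ nu_eq lam (eta * mu)) /\
        ~ (nu_lt (zeta * mu) lam /\ nu_lt lam (eta * mu)) /\
        ~ (nu_eq lam (zeta * mu) /\ nu_eq lam (eta * mu)) /\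
        ~ (nu_eq lam (zeta * mu) /\ nu_lt lam (eta * mu)) /\
        ~ (nu_eq lam (eta * mu) /\ nu_lt lam (eta * mu))) &
       [/\ nu_lt (zeta * mu) lam -> Q = lam ^+ 2 * a1,
           nu_eq lam (zeta * mu) -> Q = ee R * lam ^+ 2 * a1 /\ Q = ee R * lam * mu * a,
           nu_eq lam (eta * mu) -> Q = ee R * mu ^+ 2 * a2 /\ Q = ee R * lam * mu * a
         & nu_lt lam (eta * mu) -> Q = mu ^+ 2 * a2]]) &
  (* (iii) *)
  (nu_le (a ^+ 2) (a1 * a2) ->
   [/\ nu_lt (mu ^+ 2 * a2) (lam ^+ 2 * a1) -> Q = lam ^+ 2 * a1,
       nu_eq (lam ^+ 2 * a1) (mu ^+ 2 * a2) ->
         [/\ Q = ee R * lam ^+ 2 * a1, Q = ee R * mu ^+ 2 * a2 & nu_square (a1 * a2)]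
     & nu_lt (lam ^+ 2 * a1) (mu ^+ 2 * a2) -> Q = mu ^+ 2 * a2])].
Proof.
move=> HR qp qx_neq0 _ _ Tz Th a_zeta a2_eta lm_neq0 a1 a2 a Q.
have zeta_neq0 := tangible_neq0 Tz; have eta_neq0 := tangible_neq0 Th.
have -> : Q = binary_quadratic a1 a2 a lam mu by exact: quadratic_pair_expand.
split.
- move=> /(nu_lt_eta_zeta HR qx_neq0 zeta_neq0 a_zeta a2_eta) eta_zeta _.
  exact: binary_quadratic_eta_lt_zeta.
- move=> /(discrete_zeta_eta HR qx_neq0 zeta_neq0 a_zeta a2_eta) [p Dp zph].
  have eta_zeta : nu_lt eta zeta.
    exact: nu_lt_congr (erefl _) (nu_eq_sym zph) (nu_lt_pinv_mul HR Dp eta_neq0).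
  have [? ? _ ? ?] := binary_quadratic_eta_lt_zeta HR qx_neq0 eta_neq0 a_zeta a2_eta
    eta_zeta lm_neq0.
  split=> //; first exact: nu_position_discrete Dp eta_neq0 zph.
  exact: nu_position_exclusive.
- exact: binary_quadratic_nu_le.
Qed.
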